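(* Let $\eta\in(0,\pi/3)$. If $w_0<0$, then $w_0\in\triangle(0,z_2,z_3)\cap\triangle(0,\bar z_2,\bar z_3)$.
   Context: Let $a=\frac{e^{-i\eta}}{2\cos\eta}$, $c=\frac{1}{1-|a|^4}$, $z_k=ca^{k+1}$ for $k\ge0$, and $w_0=1-c|a|^2$ (a real number). For $u,v,w\in\mathbb{C}$, $\triangle(u,v,w)$ denotes the closed solid triangle with vertices $u,v,w$. *)

From Stdlib Require Import Reals Lra.
From Coquelicot Require Import Coquelicot.
Open Scope R_scope.

Definition expmi (eta : R) : C := (cos eta, - sin eta).

Definition a_ (eta : R) : C := Cdiv (expmi eta) (RtoC (2 * cos eta)).

Definition c_ (eta : R) : R := / (1 - (Cmod (a_ eta)) ^ 4).

Definition z_ (eta : R) (k : nat) : C :=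
  Cmult (RtoC (c_ eta)) (Cpow (a_ eta) (S k)).

Definition w0_ (eta : R) : R := 1 - c_ eta * (Cmod (a_ eta)) ^ 2.

Definition in_triangle (p u v w : C) : Prop :=
  exists s t r : R, 0 <= s /\ 0 <= t /\ 0 <= r /\ s + t + r = 1 /\
    p = Cplus (Cplus (Cmult (RtoC s) u) (Cmult (RtoC t) v)) (Cmult (RtoC r) w).

(** Since [Re a = 1/2], [a] is a root of [X^2 - X + m] with [m = |a|^2], and
    reducing modulo this quadratic gives [(1-2m) a^3 - (1-m) a^4 = m^3].  So with
    [l = w_0 / (c m^3)] the real number [w_0] equals [l(1-2m) z_2 - l(1-m) z_3].
    The hypothesis [w_0 < 0] forces [1/2 <= m < 1] (so [l <= 0]), which makes both
    coefficients nonnegative with sum at most [1].  The conjugate triangle follows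
    because [w_0] is real.  The bound [eta < PI/3] is only used for [cos eta <> 0]. *)
From Stdlib Require Import Reals Lra.
From Coquelicot Require Import Coquelicot.
Open Scope R_scope.

Lemma Cconj_RtoC (x : R) : Cconj (RtoC x) = RtoC x.
Proof. unfold Cconj, RtoC; simpl; f_equal; ring. Qed.

Lemma in_triangle_conj (p u v w : C) :
  in_triangle p u v w -> in_triangle (Cconj p) (Cconj u) (Cconj v) (Cconj w).
Proof.
  intros (s & t & r & Hs & Ht & Hr & Hsum & ->).
  exists s, t, r; repeat split; try assumption.
  now rewrite !Cplus_conj, !Cmult_conj, !Cconj_RtoC.
Qed.

Lemma in_triangle_origin (p v w : C) (t r : R) :
  0 <= t -> 0 <= r -> t + r <= 1 -> p = (t * v + r * w)%C ->
  in_triangle p 0 v w.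
Proof.
  intros Ht Hr Htr ->.
  exists (1 - t - r), t, r; repeat split; try lra.
  ring.
Qed.

Lemma re_half_quadratic_root (a : C) :
  Re a = 1 / 2 -> (a ^ 2 - a + RtoC (Cmod a ^ 2)%R = 0)%C.
Proof.
  intros Hre.
  assert (Hconj : Cconj a = (1 - a)%C).
  { destruct a as [x y]; simpl in Hre.
    apply injective_projections; simpl; lra. }
  rewrite Cmod2_conj, Hconj; ring.
Qed.

Lemma Cpow34_real_combination (a : C) (m l : R) : (a ^ 2 - a + m = 0)%C ->
  (l * (1 - 2 * m) * a ^ 3 - l * (1 - m) * a ^ 4)%C = RtoC (l * m ^ 3).
Proof.
  intros Hroot.
  transitivity (l * m ^ 3 - l * (a ^ 2 - a + m) * ((1 - m) * a ^ 2 + m * a + m ^ 2))%C.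
  - ring.
  - rewrite Hroot, RtoC_mult, RtoC_pow; ring.
Qed.

Lemma in_triangle_0_Cpow34 (a : C) (m c w : R) :
  (a ^ 2 - a + m = 0)%C -> 1 / 2 <= m <= 1 -> 0 < c -> w <= 0 -> - w <= c * m ^ 2 ->
  in_triangle w 0 (c * a ^ 3) (c * a ^ 4).
Proof.
  intros Hroot Hm Hc Hw Hwm.
  assert (Hcm : 0 < c * m ^ 2) by (apply Rmult_lt_0_compat; [lra | apply pow_lt; lra]).
  set (l := w / (c * m ^ 3)).
  assert (Hlm : l * m = w / (c * m ^ 2)) by (unfold l; field; lra).
  assert (Hl : l <= 0).
  { unfold l; apply Rmult_le_0_r; [lra |].
    apply Rlt_le, Rinv_0_lt_compat, Rmult_lt_0_compat; [lra | apply pow_lt; lra]. }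
  apply (in_triangle_origin _ _ _ (l * (1 - 2 * m)) (- (l * (1 - m)))); [nra | nra | |].
  - assert (Hsum : l * (1 - 2 * m) + - (l * (1 - m)) = - (w / (c * m ^ 2))) by lra.
    rewrite Hsum, <- Rdiv_opp_l.
    apply Rmult_le_reg_r with (c * m ^ 2); [exact Hcm |].
    unfold Rdiv; rewrite Rmult_assoc, Rinv_l by lra; lra.
  - transitivity (c * (l * (1 - 2 * m) * a ^ 3 - l * (1 - m) * a ^ 4))%C.
    + rewrite Cpow34_real_combination by exact Hroot.
      rewrite <- RtoC_mult; f_equal; unfold l; field; lra.
    + rewrite RtoC_opp, !RtoC_mult, !RtoC_minus, RtoC_mult; ring.
Qed.

Lemma w0_neg_bounds (m c : R) : 0 <= m -> c = / (1 - m ^ 2) -> 1 - c * m < 0 ->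
  1 / 2 <= m < 1 /\ 0 < c /\ - (1 - c * m) <= c * m ^ 2.
Proof.
  intros Hm0 Hc Hw.
  assert (Hm1 : m < 1).
  { destruct (Rlt_or_le m 1) as [Hlt | Hge]; [exact Hlt | exfalso].
    (* includes [m = 1], where [c] is the junk value [/ 0 = 0] *)
    assert (Hc0 : c <= 0).
    { rewrite Hc; destruct (Req_dec (1 - m ^ 2) 0) as [Hz | Hz].
      - rewrite Hz, Rinv_0; lra.
      - apply Rlt_le, Rinv_lt_0_compat; nra. }
    nra. }
  assert (Hden : 0 < 1 - m ^ 2) by nra.
  assert (Hcpos : 0 < c) by (rewrite Hc; apply Rinv_0_lt_compat, Hden).
  assert (Hcinv : c * (1 - m ^ 2) = 1) by (rewrite Hc; field; lra).
  repeat split; nra.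
Qed.

Lemma re_a_half (eta : R) : cos eta <> 0 -> Re (a_ eta) = 1 / 2.
Proof.
  intros Hcos.
  unfold a_, expmi, Cdiv, Cinv, Cmult, RtoC, Re; simpl.
  field; lra.
Qed.

Theorem lemma3p2 (eta : R) (Heta : 0 < eta < PI / 3) (Hw : w0_ eta < 0) :
  in_triangle (RtoC (w0_ eta)) (RtoC 0) (z_ eta 2) (z_ eta 3) /\
  in_triangle (RtoC (w0_ eta)) (RtoC 0) (Cconj (z_ eta 2)) (Cconj (z_ eta 3)).
Proof.
  set (m := Cmod (a_ eta) ^ 2).
  assert (Hcos : cos eta <> 0).
  { apply Rgt_not_eq, cos_gt_0; pose proof PI_RGT_0; lra. }
  assert (Hc : c_ eta = / (1 - m ^ 2)) by (unfold c_, m; f_equal; ring).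
  change (w0_ eta) with (1 - c_ eta * m) in Hw |- *.
  destruct (w0_neg_bounds m (c_ eta) (pow2_ge_0 _) Hc Hw) as (Hm & Hcpos & Hwm).
  assert (Htri : in_triangle (RtoC (1 - c_ eta * m)) 0 (z_ eta 2) (z_ eta 3)).
  { unfold z_; apply (in_triangle_0_Cpow34 (a_ eta) m); try lra.
    apply re_half_quadratic_root, re_a_half, Hcos. }
  split; [exact Htri |].
  rewrite <- (Cconj_RtoC (1 - c_ eta * m)), <- (Cconj_RtoC 0).
  apply in_triangle_conj, Htri.
Qed.
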